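(* Let $n\ge1$ and let $\equiv$ be a lattice congruence of the weak order on $S_n$. For every equivalence class $X$ of $\equiv$, the projection $p(X)=\{p(\pi):\pi\in X\}$ is an equivalence class of the restriction $\equiv^*$. In particular, any two equivalence classes $X,Y$ of $\equiv$ satisfy either $p(X)=p(Y)$ or $p(X)\cap p(Y)=\emptyset$.
   Context: $S_n$ is the set of permutations of $[n]$ in one-line notation, with the weak order (inclusion of inversion sets), which is a lattice. A lattice congruence is an equivalence relation $\equiv$ on $S_n$ such that $\pi\equiv\pi'$ and $\rho\equiv\rho'$ imply $\pi\vee\rho\equiv\pi'\vee\rho'$ and $\pi\wedge\rho\equiv\pi'\wedge\rho'$. For $\pi\in S_n$, $p(\pi)\in S_{n-1}$ is obtained by deleting the value $n$. For $\sigma\in S_{n-1}$, $c_n(\sigma)\in S_n$ is $\sigma$ with $n$ appended at the end. The restriction $\equiv^*$ is the relation on $S_{n-1}$ given by $\sigma\equiv^*\tau$ iff $c_n(\sigma)\equiv c_n(\tau)$; it is a lattice congruence on $S_{n-1}$. *)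

From HB Require Import structures.
From mathcomp Require Import all_boot all_fingroup.
Set Implicit Arguments. Unset Strict Implicit. Unset Printing Implicit Defensive.

(* Permutations of [n] are represented as 'S_n (values 0..n-1 instead of 1..n;
   the value "n" becomes ord_max in 'S_n.+1).
   One-line notation of s : the sequence s(0) s(1) ... s(n-1). *)
Definition oneline n (s : 'S_n) : seq nat := [seq val (s i) | i <- enum 'I_n].

Definition inv_set n (s : 'S_n) : {set 'I_n * 'I_n} :=
  [set ab : 'I_n * 'I_n | (ab.1 < ab.2)%N && (((s^-1)%g ab.2) < ((s^-1)%g ab.1))%N].

Definition weak_le n (s t : 'S_n) : bool := inv_set s \subset inv_set t.

Definition is_join n (x y z : 'S_n) : bool :=
  [&& weak_le x z, weak_le y z & [forall w, weak_le x w ==> weak_le y w ==> weak_le z w]].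
Definition is_meet n (x y z : 'S_n) : bool :=
  [&& weak_le z x, weak_le z y & [forall w, weak_le w x ==> weak_le w y ==> weak_le w z]].

(* Lattice congruence of the weak order (joins/meets are expressed through
   their defining universal properties; they exist since the weak order is a lattice). *)
Definition lattice_congruence n (r : rel 'S_n) : Prop :=
  [/\ (forall x, r x x),
      (forall x y, r x y -> r y x),
      (forall x y z, r x y -> r y z -> r x z),
      (forall x x' y y' j j', r x x' -> r y y' -> is_join x y j -> is_join x' y' j' -> r j j')
    & (forall x x' y y' m m', r x x' -> r y y' -> is_meet x y m -> is_meet x' y' m' -> r m m')].

(* c_n : append the largest value at the end. *)
Definition cn n (s : 'S_n) : 'S_n.+1 := lift_perm ord_max ord_max s.

Definition restr n (r : rel 'S_n.+1) : rel 'S_n := fun s t => r (cn s) (cn t).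

Definition eq_class (T : finType) (r : rel T) (x : T) : {set T} := [set y | r x y].
Definition is_class (T : finType) (r : rel T) (X : {set T}) : Prop :=
  exists x, X = eq_class r x.

Definition pimage n (X : {set 'S_n.+1}) : {set 'S_n} :=
  [set s | [exists pi in X, oneline s == filter (predC1 n) (oneline pi)]].

From HB Require Import structures.
From mathcomp Require Import all_boot all_fingroup.
Set Implicit Arguments. Unset Strict Implicit. Unset Printing Implicit Defensive.

(* The permutations pi with p(pi) = sigma form the weak-order interval
   [c_n sigma, t sigma], where t sigma puts n in front of sigma.  Hence
   pi /\ c_n(w0) = c_n(p pi) and c_n sigma \/ t 1 = t sigma.  Meeting with
   c_n(w0) shows that p maps a class of == into a single class of ==*.
   Conversely, let sigma0 = p(pi) and c_n sigma0 == c_n sigma.  Joining with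
   t 1 gives t sigma0 == t sigma, so pi = pi /\ t sigma0 == pi /\ t sigma.
   Since c_n sigma == c_n sigma /\ c_n sigma0 <= pi /\ t sigma, the element
   pi' := (pi /\ t sigma) \/ c_n sigma is congruent to pi, and
   c_n sigma <= pi' <= t sigma gives p(pi') = sigma. *)

Lemma connect_sub_preorder (T : finType) (e R : rel T) :
  reflexive R -> transitive R -> subrel e R -> subrel (connect e) R.
Proof.
move=> R_refl R_trans eR x _ /connectP[p e_p ->].
elim: p x e_p => [|y p IHp] x /=; first by rewrite R_refl.
by case/andP=> /eR Rxy /IHp; apply: R_trans.
Qed.

Section WeakOrder.
Variable n : nat.
Implicit Types (s t w z : 'S_n) (a b c : 'I_n).

Definition before s a b := (s^-1)%g a < (s^-1)%g b.

Lemma inv_setE s a b : ((a, b) \in inv_set s) = (a < b) && before s b a.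
Proof. by rewrite inE. Qed.

Lemma before_irr s : irreflexive (before s).
Proof. by move=> a; rewrite /before ltnn. Qed.

Lemma before_trans s : transitive (before s).
Proof. by move=> b a c; apply: ltn_trans. Qed.
#[global] Arguments before_trans s [y x z].

Lemma beforeNE s a b : a != b -> ~~ before s b a = before s a b.
Proof. by rewrite /before -(inj_eq (@perm_inj _ s^-1)) -val_eqE; case: ltngtP. Qed.

Lemma ltn_ord_neq a b : a < b -> a != b.
Proof. by rewrite -val_eqE neq_ltn => ->. Qed.

Lemma before_total s a b : a != b -> before s a b || before s b a.
Proof. by move=> /(beforeNE s) <-; rewrite orNb. Qed.

Lemma before_cotrans s a b c : before s a c -> before s a b || before s b c.
Proof.
rewrite /before => ac; case: ltnP => //= ba; exact: leq_ltn_trans ba ac.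
Qed.

Lemma weak_leP s t :
  reflect (forall a b, a < b -> before s b a -> before t b a) (weak_le s t).
Proof.
apply: (iffP subsetP) => [le a b ab sba | le [a b]].
  by have := le (a, b); rewrite !inv_setE ab; apply.
by rewrite !inv_setE => /andP[ab /(le _ _ ab) ->]; rewrite ab.
Qed.

Lemma weak_le_refl s : weak_le s s.
Proof. exact: subxx. Qed.

Lemma weak_le_trans : transitive (@weak_le n).
Proof. by move=> t s w; apply: subset_trans. Qed.

Lemma weak_le1 s : weak_le 1 s.
Proof. by apply/weak_leP => a b ab; rewrite /before invg1 !perm1 ltnNge ltnW. Qed.

Section OrderPerm.
Variable lt : rel 'I_n.
Hypotheses (lt_irr : irreflexive lt) (lt_trans : transitive lt)
  (lt_total : forall a b, a != b -> lt a b || lt b a).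

Definition order_rank a := #|[set b | lt b a]|.

Lemma order_rank_lt a b : lt a b -> order_rank a < order_rank b.
Proof.
move=> ab; apply: proper_card; apply/properP; split.
  by apply/subsetP => c; rewrite !inE => ca; apply: lt_trans ca ab.
by exists a; rewrite !inE ?ab ?lt_irr.
Qed.

Lemma order_rankE a b : (order_rank a < order_rank b) = lt a b.
Proof.
apply/idP/idP => [ab|]; last exact: order_rank_lt.
have [eab|/lt_total/orP[] // /order_rank_lt ba] := eqVneq a b.
  by rewrite eab ltnn in ab.
by rewrite ltnNge (ltnW ba) in ab.
Qed.

Lemma order_rank_bound a : order_rank a < n.
Proof.
rewrite -[n in _ < n]card_ord -cardsT; apply: proper_card; apply/properP.
by split; [exact: subsetT | exists a; rewrite !inE ?lt_irr].
Qed.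

Lemma order_rank_inj : injective (fun a => Ordinal (order_rank_bound a)).
Proof.
move=> a b [] eab; apply/eqP; apply: contraT => /lt_total.
by rewrite -!order_rankE eab ltnn.
Qed.

Definition order_perm : 'S_n := (perm order_rank_inj)^-1.

Lemma before_order_perm a b : before order_perm a b = lt a b.
Proof. by rewrite /before invgK !permE order_rankE. Qed.

End OrderPerm.

Lemma sorted_codom_before s : sorted (before s) (codom s).
Proof.
have: sorted ltn (map val (enum 'I_n)) by rewrite val_enum_ord iota_ltn_sorted.
by rewrite codomE !sorted_map; apply: sub_sorted => i j; rewrite /= /before !permK.
Qed.

Lemma codom_perm_inj : injective (fun s : 'S_n => codom s).
Proof.
move=> s t; rewrite /= !codomE => /eq_in_map st.
by apply/permP => i; apply: st; rewrite mem_enum.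
Qed.

Lemma before_inj s t : before s =2 before t -> s = t.
Proof.
move=> st; apply: codom_perm_inj => /=.
apply: (irr_sorted_eq (before_trans s) (before_irr s) (sorted_codom_before s)).
- by apply: sub_sorted (sorted_codom_before t) => a b; rewrite st.
- by move=> a; rewrite !perm_onto.
Qed.

Lemma weak_le_anti s t : weak_le s t -> weak_le t s -> s = t.
Proof.
move=> /weak_leP st /weak_leP ts.
have inv_eq a b : a < b -> before s b a = before t b a.
  by move=> ab; apply/idP/idP; [apply: st | apply: ts].
apply: before_inj => a b; case: (ltngtP a b) => [ab|ba|/val_inj->].
- by rewrite -!(beforeNE _ (ltn_ord_neq ab)) inv_eq.
- exact: inv_eq.
- by rewrite !before_irr.
Qed.

Lemma exists_perm_inv_set (I : rel 'I_n) :
  (forall a b c, a < b -> b < c -> I a b -> I b c -> I a c) ->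
  (forall a b c, a < b -> b < c -> I a c -> I a b || I b c) ->
  exists w, forall a b, a < b -> before w b a = I a b.
Proof.
move=> I_trans I_cotrans.
pose lt a b := if a < b then ~~ I a b else (b < a) && I b a.
have lt_irr : irreflexive lt by move=> a; rewrite /lt ltnn.
have lt_total a b : a != b -> lt a b || lt b a.
  by rewrite -val_eqE /lt; case: ltngtP => // _ _; case: (I _ _).
have lt_trans : transitive lt.
  move=> b a c; rewrite /lt.
  case: (ltngtP a b) => [ab nIab|ba /= Iba|/val_inj <-]; last by [].
  - case: (ltngtP b c) => [bc nIbc|cb /= Icb|/val_inj <-]; last by [].
    + rewrite (ltn_trans ab bc) /=; apply/negP => /(I_cotrans _ _ _ ab bc).
      by rewrite (negbTE nIab) (negbTE nIbc).
    + case: (ltngtP a c) => [ac|ca|/val_inj eac] /=.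
      * by apply/negP => Iac; rewrite (I_trans _ _ _ ac cb Iac Icb) in nIab.
      * by case/orP: (I_cotrans _ _ _ ca ab Icb) => // Iab; rewrite Iab in nIab.
      * by rewrite eac Icb in nIab.
  - case: (ltngtP b c) => [bc nIbc|cb /= Icb|/val_inj <-]; last by [].
    + case: (ltngtP a c) => [ac|ca|/val_inj eac] /=.
      * by apply/negP => Iac; rewrite (I_trans _ _ _ ba ac Iba Iac) in nIbc.
      * by case/orP: (I_cotrans _ _ _ bc ca Iba) => // Ibc; rewrite Ibc in nIbc.
      * by rewrite -eac Iba in nIbc.
    + have ca := ltn_trans cb ba.
      by rewrite ltnNge (ltnW ca) ca (I_trans _ _ _ cb ba Icb Iba).
exists (order_perm lt_irr lt_trans lt_total) => a b ab.
by rewrite before_order_perm /lt ltnNge (ltnW ab) ab.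
Qed.

Lemma exists_weak_top : exists w, forall s, weak_le s w.
Proof.
have [w w_inv] := @exists_perm_inv_set (fun _ _ => true)
  (fun _ _ _ _ _ _ _ => erefl) (fun _ _ _ _ _ _ => erefl).
by exists w => s; apply/weak_leP => a b ab _; rewrite w_inv.
Qed.

Lemma connect_cotrans (e : rel 'I_n) :
  (forall a b, e a b -> a < b) ->
  (forall a b c, a < b -> b < c -> e a c -> e a b || e b c) ->
  forall a b c, a < b -> b < c -> connect e a c -> connect e a b || connect e b c.
Proof.
move=> e_lt e_cotrans a b c ab bc /connectP[p]; elim: p a ab => [|d p IHp] a ab /=.
  by move=> _ ca; move: bc; rewrite ca ltnNge ltnW.
case/andP=> ead pd ec; case: (ltngtP b d) => [bd|db|/val_inj ->].
- case/orP: (e_cotrans _ _ _ ab bd ead) => [/connect1 -> // | ebd].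
  by rewrite (connect_trans (connect1 ebd)) ?orbT //; apply/connectP; exists p.
- case/orP: (IHp _ db pd ec) => [cdb|-> //]; last by rewrite orbT.
  by rewrite (connect_trans (connect1 ead) cdb).
- by rewrite connect1.
Qed.

Lemma is_meetP s t w :
  reflect [/\ weak_le w s, weak_le w t
            & forall z, weak_le z s -> weak_le z t -> weak_le z w]
          (is_meet s t w).
Proof.
apply: (iffP and3P) => [[ws wt /forallP glb] | [ws wt glb]]; split=> //.
  by move=> z zs zt; have /implyP/(_ zs)/implyP/(_ zt) := glb z.
by apply/forallP => z; apply/implyP => zs; apply/implyP => zt; apply: glb.
Qed.

Lemma is_joinP s t w :
  reflect [/\ weak_le s w, weak_le t w
            & forall z, weak_le s z -> weak_le t z -> weak_le w z]
          (is_join s t w).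
Proof.
apply: (iffP and3P) => [[sw tw /forallP lub] | [sw tw lub]]; split=> //.
  by move=> z sz tz; have /implyP/(_ sz)/implyP/(_ tz) := lub z.
by apply/forallP => z; apply/implyP => sz; apply/implyP => tz; apply: lub.
Qed.

Lemma is_meet_of_le s t : weak_le s t -> is_meet s t s.
Proof. by move=> st; apply/is_meetP; split=> //; exact: weak_le_refl. Qed.

Lemma is_join_of_le s t : weak_le s t -> is_join s t t.
Proof. by move=> st; apply/is_joinP; split=> //; exact: weak_le_refl. Qed.

(* The non-inversions of the meet are the transitive closure of the
   non-inversions of [s] and [t]. *)
Lemma exists_meet s t : exists w, is_meet s t w.
Proof.
pose e a b := (a < b) && (before s a b || before t a b).
have e_lt a b : e a b -> a < b by case/andP.
have e_cotrans a b c : a < b -> b < c -> e a c -> e a b || e b c.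
  move=> ab bc /andP[_ st_ac]; rewrite /e ab bc /=.
  by case/orP: st_ac => /(before_cotrans b)/orP[] ->; rewrite ?orbT.
have [w w_inv] : exists w, forall a b, a < b -> before w b a = ~~ connect e a b.
  apply: exists_perm_inv_set => a b c ab bc.
    move=> /negbTE nCab /negbTE nCbc; apply/negP.
    by move=> /(connect_cotrans e_lt e_cotrans ab bc); rewrite nCab nCbc.
  by rewrite -negb_and; apply: contra => /andP[]; apply: connect_trans.
have w_le u : (forall a b, a < b -> before u a b -> e a b) -> weak_le w u.
  move=> ue; apply/weak_leP => a b ab; rewrite w_inv //; apply: contraR => nuba.
  by apply/connect1/ue; rewrite // -(beforeNE u (ltn_ord_neq ab)).
exists w; apply/is_meetP; split.
- by apply: w_le => a b ab sab; rewrite /e ab sab.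
- by apply: w_le => a b ab tab; rewrite /e ab tab orbT.
move=> z /weak_leP zs /weak_leP zt; apply/weak_leP => a b ab zba; rewrite w_inv //.
have z_mono : subrel (connect e) (fun u v => (z^-1)%g u <= (z^-1)%g v).
  apply: connect_sub_preorder => [u|v u x|u v /andP[uv st_uv]]; first exact: leqnn.
    exact: leq_trans.
  rewrite leqNgt; apply/negP => zvu; move: st_uv.
  by rewrite -!(beforeNE _ (ltn_ord_neq uv)) (zs _ _ uv zvu) (zt _ _ uv zvu).
by apply/negP => /z_mono; rewrite leqNgt => /negP[].
Qed.

(* Dually, the inversions of the join are the transitive closure of the
   inversions of [s] and [t]. *)
Lemma exists_join s t : exists w, is_join s t w.
Proof.
pose e a b := (a < b) && (before s b a || before t b a).
have e_lt a b : e a b -> a < b by case/andP.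
have e_cotrans a b c : a < b -> b < c -> e a c -> e a b || e b c.
  move=> ab bc /andP[_ st_ca]; rewrite /e ab bc /=.
  by case/orP: st_ca => /(before_cotrans b)/orP[] ->; rewrite ?orbT.
have [w w_inv] : exists w, forall a b, a < b -> before w b a = connect e a b.
  apply: exists_perm_inv_set => a b c ab bc; first exact: connect_trans.
  exact: connect_cotrans.
have le_w u : (forall a b, a < b -> before u b a -> e a b) -> weak_le u w.
  by move=> ue; apply/weak_leP => a b ab /(ue _ _ ab)/connect1; rewrite w_inv.
exists w; apply/is_joinP; split.
- by apply: le_w => a b ab sba; rewrite /e ab sba.
- by apply: le_w => a b ab tba; rewrite /e ab tba orbT.
move=> z /weak_leP sz /weak_leP tz; apply/weak_leP => a b ab; rewrite w_inv //.
have z_mono : subrel (connect e) (fun u v => (z^-1)%g v <= (z^-1)%g u).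
  apply: connect_sub_preorder => [u|v u x uv vx|u v /andP[uv st_vu]].
  - exact: leqnn.
  - exact: leq_trans vx uv.
  by apply: ltnW; case/orP: st_vu => [/(sz _ _ uv) | /(tz _ _ uv)].
have nba : b != a by rewrite eq_sym ltn_ord_neq.
by move=> /z_mono; rewrite leqNgt -/(before z a b) (beforeNE z nba).
Qed.
End WeakOrder.

Lemma oneline_codom n (s : 'S_n) : oneline s = map val (codom s).
Proof. by rewrite codomE -map_comp. Qed.

Lemma oneline_inj n : injective (@oneline n).
Proof. by move=> s t; rewrite !oneline_codom => /(inj_map val_inj)/codom_perm_inj. Qed.

Section DeleteMax.
Variable m : nat.
Local Notation N := (@ord_max m).
Implicit Types (s : 'S_m) (x y z : 'S_m.+1) (a b : 'I_m).

Lemma before_lift_total x a b :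
  a != b -> before x (lift N a) (lift N b) || before x (lift N b) (lift N a).
Proof. by rewrite -(inj_eq (@lift_inj _ N)); apply: before_total. Qed.

Definition proj x : 'S_m :=
  @order_perm m (relpre (lift N) (before x)) (fun a => before_irr x (lift N a))
    (fun b a c => @before_trans _ x (lift N b) (lift N a) (lift N c))
    (@before_lift_total x).

Lemma before_proj x a b : before (proj x) a b = before x (lift N a) (lift N b).
Proof. exact: before_order_perm. Qed.

Definition right_of_max x : {set 'I_m} := [set a | before x N (lift N a)].

Lemma weak_le_lift x y :
  weak_le x y = weak_le (proj x) (proj y) && (right_of_max x \subset right_of_max y).
Proof.
apply/idP/andP => [/weak_leP xy | [/weak_leP pxy /subsetP rxy]].
  split; last by apply/subsetP => a; rewrite !inE; apply: xy; rewrite lift_max ltn_ord.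
  by apply/weak_leP => a b ab; rewrite !before_proj; apply: xy; rewrite !lift_max.
apply/weak_leP => u v; case: (unliftP N u) => [a ->|->]; case: (unliftP N v) => [b ->|->].
- by rewrite !lift_max -!before_proj; apply: pxy.
- by move=> _; have := rxy a; rewrite !inE.
- by rewrite lift_max ltnNge ltnW.
- by rewrite ltnn.
Qed.

Definition prepend_max s : 'S_m.+1 := lift_perm ord0 N s.

Lemma proj_cn s : proj (cn s) = s.
Proof.
by apply: before_inj => a b; rewrite before_proj /before lift_permV !lift_perm_lift !lift_max.
Qed.

Lemma right_of_max_cn s : right_of_max (cn s) = set0.
Proof.
apply/setP => a; rewrite !inE /before lift_permV lift_perm_id lift_perm_lift lift_max.
by rewrite ltnNge ltnW.
Qed.

Lemma proj_prepend_max s : proj (prepend_max s) = s.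
Proof.
by apply: before_inj => a b; rewrite before_proj /before lift_permV !lift_perm_lift !lift0.
Qed.

Lemma right_of_max_prepend_max s : right_of_max (prepend_max s) = setT.
Proof. by apply/setP => a; rewrite !inE /before lift_permV lift_perm_id lift_perm_lift lift0. Qed.

Lemma cn_proj_le x : weak_le (cn (proj x)) x.
Proof. by rewrite weak_le_lift proj_cn right_of_max_cn weak_le_refl sub0set. Qed.

Lemma le_prepend_max_proj x : weak_le x (prepend_max (proj x)).
Proof. by rewrite weak_le_lift proj_prepend_max right_of_max_prepend_max weak_le_refl subsetT. Qed.

Lemma cn_le_prepend_max s : weak_le (cn s) (prepend_max s).
Proof. by rewrite weak_le_lift proj_cn proj_prepend_max weak_le_refl right_of_max_cn sub0set. Qed.

Lemma proj_eq_of_between s x :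
  weak_le (cn s) x -> weak_le x (prepend_max s) -> proj x = s.
Proof.
rewrite !weak_le_lift proj_cn proj_prepend_max => /andP[sx _] /andP[xs _].
exact: weak_le_anti.
Qed.

Lemma is_meet_cn_top x w0 :
  (forall s, weak_le s w0) -> is_meet x (cn w0) (cn (proj x)).
Proof.
move=> top; apply/is_meetP; split; first exact: cn_proj_le.
  by rewrite weak_le_lift !proj_cn top right_of_max_cn sub0set.
move=> z; rewrite !weak_le_lift !proj_cn !right_of_max_cn => /andP[zx _] /andP[_ z0].
by rewrite zx z0.
Qed.

Lemma is_join_prepend_max s : is_join (cn s) (prepend_max 1) (prepend_max s).
Proof.
apply/is_joinP; split; first exact: cn_le_prepend_max.
  by rewrite weak_le_lift !proj_prepend_max weak_le1 !right_of_max_prepend_max subxx.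
move=> z; rewrite !weak_le_lift proj_cn !proj_prepend_max !right_of_max_prepend_max.
by case/andP=> -> _ /andP[_ ->].
Qed.

Lemma codom_proj x : map (lift N) (codom (proj x)) = filter (predC1 N) (codom x).
Proof.
apply: (irr_sorted_eq (before_trans x) (before_irr x)).
- rewrite sorted_map; apply: sub_sorted (sorted_codom_before (proj x)) => a b.
  by rewrite before_proj.
- apply: sorted_filter; [exact: before_trans | exact: sorted_codom_before].
move=> u; rewrite mem_filter perm_onto andbT.
case: (unliftP N u) => [a ->|->].
  by rewrite (mem_map (@lift_inj _ N)) perm_onto /= eq_sym neq_lift.
by rewrite /= eqxx; apply/mapP => -[a _ /eqP]; rewrite (negbTE (neq_lift _ _)).
Qed.

Lemma oneline_proj x : oneline (proj x) = filter (predC1 m) (oneline x).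
Proof.
rewrite !oneline_codom filter_map -(@eq_filter _ (predC1 N)) // -codom_proj.
by rewrite -[in RHS]map_comp; apply: eq_map => a; exact/esym/lift_max.
Qed.

Lemma mem_pimage (X : {set 'S_m.+1}) s :
  (s \in pimage X) = [exists x in X, proj x == s].
Proof.
rewrite inE; apply: eq_existsb => x.
by rewrite -oneline_proj (inj_eq (@oneline_inj _)) eq_sym.
Qed.

End DeleteMax.

Lemma pimage_eq_class m (r : rel 'S_m.+1) x : lattice_congruence r ->
  pimage (eq_class r x) = eq_class (restr r) (proj x).
Proof.
case=> r_refl r_sym r_trans r_join r_meet; have [w0 top] := exists_weak_top m.
apply/setP => s; rewrite mem_pimage !inE /restr.
apply/existsP/idP => [[y /andP[]]|r_cn]; rewrite ?inE.
  move=> rxy /eqP <-.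
  exact: r_meet rxy (r_refl _) (is_meet_cn_top x top) (is_meet_cn_top y top).
set s0 := proj x in r_cn *.
have r_pm : r (prepend_max s0) (prepend_max s).
  exact: r_join r_cn (r_refl _) (is_join_prepend_max s0) (is_join_prepend_max s).
have [y y_meet] := exists_meet x (prepend_max s).
have /is_meetP[_ y_pm y_glb] := y_meet.
have rxy : r x y.
  exact: r_meet (r_refl x) r_pm (is_meet_of_le (le_prepend_max_proj x)) y_meet.
have [mu mu_meet] := exists_meet (cn s) (cn s0).
have /is_meetP[mu_s mu_s0 _] := mu_meet.
have r_mu : r (cn s) mu.
  exact: r_meet (r_refl _) (r_sym _ _ r_cn) (is_meet_of_le (weak_le_refl _)) mu_meet.
have mu_y : weak_le mu y.
  apply: y_glb; first exact: weak_le_trans mu_s0 (cn_proj_le x).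
  exact: weak_le_trans mu_s (cn_le_prepend_max s).
have [z z_join] := exists_join (cn s) y.
have /is_joinP[s_z _ z_lub] := z_join.
have rzy : r z y by exact: r_join r_mu (r_refl y) z_join (is_join_of_le mu_y).
exists z; rewrite inE (r_trans _ _ _ rxy (r_sym _ _ rzy)) /=.
by rewrite (proj_eq_of_between s_z (z_lub _ (cn_le_prepend_max s) y_pm)).
Qed.

Lemma eq_class_eq_or_disjoint (T : finType) (e : rel T) x y :
  (forall a b, e a b -> e b a) -> transitive e ->
  eq_class e x = eq_class e y \/ [disjoint eq_class e x & eq_class e y].
Proof.
move=> e_sym e_trans; case exy: (e x y); [left | right].
  apply/setP => z; rewrite !inE; apply/idP/idP; first exact: e_trans (e_sym _ _ exy).
  exact: e_trans exy.
rewrite -setI_eq0; apply/eqP/setP => z; rewrite !inE; apply/negP => /andP[xz yz].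
by rewrite (e_trans _ _ _ xz (e_sym _ _ yz)) in exy.
Qed.

Theorem mainTheorem4 (m : nat) (r : rel 'S_m.+1) :
  lattice_congruence r ->
  (forall X : {set 'S_m.+1}, is_class r X -> is_class (restr r) (pimage X)) /\
  (forall X Y : {set 'S_m.+1}, is_class r X -> is_class r Y ->
     pimage X = pimage Y \/ [disjoint pimage X & pimage Y]).
Proof.
move=> r_cong; have [_ r_sym r_trans _ _] := r_cong.
have classP X : is_class r X -> is_class (restr r) (pimage X).
  by case=> x ->; exists (proj x); exact: pimage_eq_class.
split=> // X Y /classP[a ->] /classP[b ->].
apply: eq_class_eq_or_disjoint => [s t | t s u]; rewrite /restr; [exact: r_sym | exact: r_trans].
Qed.
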